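(* Let $n$ be even, $k_U,k_V\le n/2$, and ${\mathbf{a}},{\mathbf{b}},{\mathbf{c}},{\mathbf{d}}\in\mathbb{F}_3^{n/2}$ with $a_id_i-b_ic_i=1$, $a_ic_i\neq0$ for all $i$, and let $n_I=|\{1\le i\le n/2:b_id_i=0\}|$. Choose ${\mathbf{H}}_U$ uniformly in $\mathbb{F}_3^{(n/2-k_U)\times n/2}$ and ${\mathbf{H}}_V$ uniformly in $\mathbb{F}_3^{(n/2-k_V)\times n/2}$, let $U=\{{\mathbf{u}}:{\mathbf{u}}{\mathbf{H}}_U^\top={\mathbf{0}}\}$, $V=\{{\mathbf{v}}:{\mathbf{v}}{\mathbf{H}}_V^\top={\mathbf{0}}\}$, and ${\mathcal C}=\{({\mathbf{a}}\odot{\mathbf{u}}+{\mathbf{b}}\odot{\mathbf{v}},{\mathbf{c}}\odot{\mathbf{u}}+{\mathbf{d}}\odot{\mathbf{v}}):{\mathbf{u}}\in U,{\mathbf{v}}\in V\}$. For $1\le z\le n$ let $a_{({\mathbf{u}},{\mathbf{v}})}(z)$, $a_{({\mathbf{u}},{\mathbf{0}})}(z)$, $a_{({\mathbf{0}},{\mathbf{v}})}(z)$ be the expected numbers of codewords of weight $z$ respectively in ${\mathcal C}$, of the form $({\mathbf{a}}\odot{\mathbf{u}},{\mathbf{c}}\odot{\mathbf{u}})$ with ${\mathbf{u}}\in U$, and of the form $({\mathbf{b}}\odot{\mathbf{v}},{\mathbf{d}}\odot{\mathbf{v}})$ with ${\mathbf{v}}\in V$. For even $z$: $$a_{({\mathbf{u}},{\mathbf{0}})}(z)=\frac{\binom{n/2}{z/2}2^{z/2}}{3^{n/2-k_U}},\qquad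 a_{({\mathbf{0}},{\mathbf{v}})}(z)=\frac{1}{3^{n/2-k_V}}\sum_{\substack{j=0\\ j\text{ even}}}^{z}\binom{n_I}{j}\binom{n/2-n_I}{\frac{z-j}{2}}2^{(z+j)/2},$$ $$a_{({\mathbf{u}},{\mathbf{v}})}(z)=a_{({\mathbf{u}},{\mathbf{0}})}(z)+a_{({\mathbf{0}},{\mathbf{v}})}(z)+\frac{1}{3^{n-k_U-k_V}}\Big(\binom{n}{z}2^z-\binom{n/2}{z/2}2^{z/2}-\sum_{\substack{j=0\\ j\text{ even}}}^{z}\binom{n_I}{j}\binom{n/2-n_I}{\frac{z-j}{2}}2^{(z+j)/2}\Big);$$ for odd $z$: $$a_{({\mathbf{u}},{\mathbf{0}})}(z)=0,\qquad a_{({\mathbf{0}},{\mathbf{v}})}(z)=\frac{1}{3^{n/2-k_V}}\sum_{\substack{j=0\\ j\text{ odd}}}^{z}\binom{n_I}{j}\binom{n/2-n_I}{\frac{z-j}{2}}2^{(z+j)/2},$$ $$a_{({\mathbf{u}},{\mathbf{v}})}(z)=a_{({\mathbf{0}},{\mathbf{v}})}(z)+\frac{1}{3^{n-k_U-k_V}}\Big(\binom{n}{z}2^z-\sum_{\substack{j=0\\ j\text{ odd}}}^{z}\binom{n_I}{j}\binom{n/2-n_I}{\frac{z-j}{2}}2^{(z+j)/2}\Big).$$ On the other hand, for a linear code of length $n$ over $\mathbb{F}_3$ defined by a parity-check matrix chosen uniformly in $\mathbb{F}_3^{(n-k_U-k_V)\times n}$, the expected number of codewords of weight $z>0$ is 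$a(z)=\binom{n}{z}2^z/3^{n-k_U-k_V}$.
   Context: $\odot$ is the componentwise product; weight means Hamming weight; binomial coefficients with lower index out of range are $0$. *)

From mathcomp Require Import all_boot all_order all_algebra.
Set Implicit Arguments. Unset Strict Implicit. Unset Printing Implicit Defensive.
Import Order.TTheory GRing.Theory Num.Theory.
Local Open Scope ring_scope.

Definition hprod (F : ringType) (m : nat) (x y : 'rV[F]_m) : 'rV[F]_m :=
  \row_i (x 0 i * y 0 i).

Definition wt (F : ringType) (m : nat) (x : 'rV[F]_m) : nat :=
  #|[set i : 'I_m | x 0 i != 0]|.

Definition kerH (F : finRingType) (r m : nat) (H : 'M[F]_(r, m)) : {set 'rV[F]_m} :=
  [set u : 'rV[F]_m | u *m H^T == 0].

Definition nwt (F : finRingType) (m : nat) (S : {set 'rV[F]_m}) (z : nat) : nat :=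
  #|[set x in S | wt x == z]|.

(* the code C = {(a.u + b.v, c.u + d.v) : u in U, v in V}, codewords being
   the concatenation (row_mx) of the two halves, of length m + m = n *)
Definition codeC (F : finRingType) (m rU rV : nat) (a b c d : 'rV[F]_m)
  (HU : 'M[F]_(rU, m)) (HV : 'M[F]_(rV, m)) : {set 'rV[F]_(m + m)} :=
  [set row_mx (hprod a u + hprod b v) (hprod c u + hprod d v)
     | u in kerH HU, v in kerH HV].

Definition codeCU (F : finRingType) (m rU : nat) (a c : 'rV[F]_m)
  (HU : 'M[F]_(rU, m)) : {set 'rV[F]_(m + m)} :=
  [set row_mx (hprod a u) (hprod c u) | u in kerH HU].

Definition codeCV (F : finRingType) (m rV : nat) (b d : 'rV[F]_m)
  (HV : 'M[F]_(rV, m)) : {set 'rV[F]_(m + m)} :=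
  [set row_mx (hprod b v) (hprod d v) | v in kerH HV].

Definition expect2 (F : finRingType) (m rU rV : nat)
  (f : 'M[F]_(rU, m) -> 'M[F]_(rV, m) -> nat) : rat :=
  (\sum_(HU : 'M[F]_(rU, m)) \sum_(HV : 'M[F]_(rV, m)) (f HU HV)%:R)
  / (#|{: 'M[F]_(rU, m)}| * #|{: 'M[F]_(rV, m)}|)%:R.

Definition expect1 (F : finRingType) (r m : nat) (f : 'M[F]_(r, m) -> nat) : rat :=
  (\sum_(H : 'M[F]_(r, m)) (f H)%:R) / #|{: 'M[F]_(r, m)}|%:R.

Definition jsum (m nI z : nat) (p : bool) : nat :=
  \sum_(0 <= j < z.+1 | odd j == p)
     'C(nI, j) * 'C(m - nI, (z - j)./2) * 2 ^ ((z + j)./2).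

From mathcomp Require Import all_boot all_order all_algebra.
From mathcomp Require Import ring zify.
Set Implicit Arguments. Unset Strict Implicit. Unset Printing Implicit Defensive.
Import GRing.Theory Num.Theory.
Local Open Scope ring_scope.

(* A fixed nonzero u satisfies u H^T = 0 for exactly a fraction q^-r of the
   matrices H with r rows, since H |-> u H^T is a surjective additive map onto
   F^r; the zero vector lies in every kernel. By linearity of expectation, the
   expected number of weight-z codewords in the image of ker H under an
   injective linear map is q^-r times the number of weight-z vectors in the
   image of the whole space; for C, the independent choices of H_U and H_V split
   the sum into the four cases u = 0 or not, v = 0 or not. The counts are read
   off generating functions: coordinate i of (a.u, c.u) contributes 2 to the
   weight when u_i <> 0, coordinate i of (b.v, d.v) contributes 1 or 2 according
   as b_i d_i = 0 or not, and (u, v) |-> (a.u + b.v, c.u + d.v) is a bijection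
   of F_3^n because ad - bc = 1. *)

Lemma card_preim0_surj (M N : finZmodType) (f : M -> N) :
    {morph f : x y / x + y} -> (forall y, exists x, f x = y) ->
  (#|[set x | f x == 0%R]| * #|N|)%N = #|M|.
Proof.
move=> fD f_surj.
have fB x y : f (x - y) = f x - f y.
  by apply/eqP; rewrite eq_sym subr_eq -fD subrK.
have card_fiber y : #|[set x | f x == y]| = #|[set x | f x == 0]|.
  have [x0 <-] := f_surj y.
  rewrite -[RHS](card_imset _ (addIr x0)); apply: eq_card => x; rewrite inE.
  apply/eqP/imsetP => [fx|[x' + ->]]; last by rewrite inE fD => /eqP ->; rewrite add0r.
  by exists (x - x0); rewrite ?subrK // inE fB fx subrr.
rewrite mulnC -sum_nat_const -[RHS]sum1_card (partition_big f predT) //=.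
apply: eq_bigr => y _; rewrite -(card_fiber y) -sum1_card.
by apply: eq_bigl => x; rewrite inE.
Qed.

Lemma card_set_sum (T : finType) (P : pred T) : #|[set x | P x]| = (\sum_x P x)%N.
Proof.
by rewrite -sum1_card big_mkcond; apply: eq_bigr => x _; rewrite inE; case: (P x).
Qed.

Section PolyCoefficients.

Variable R : comNzRingType.

Lemma coef_sum_Xn (T : finType) (k : T -> nat) (z : nat) :
  (\sum_x 'X^(k x) : {poly R})`_z = (\sum_x (k x == z))%N%:R.
Proof. by rewrite coef_sum natr_sum; apply: eq_bigr => x _; rewrite coefXn eq_sym. Qed.

Lemma coef_binomial (N c z : nat) :
  ((1 + 'X *+ c) ^+ N : {poly R})`_z = ('C(N, z) * c ^ z)%:R.
Proof.
elim: N z => [|N IH] [|z]; rewrite ?expr0 ?coef1 //.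
  by rewrite exprS mulrDl mul1r mulrnAl coefD coefMn coefXM /= IH mul0rn addr0 !bin0.
rewrite exprS mulrDl mul1r mulrnAl coefD coefMn coefXM /= !IH binS expnS.
by rewrite !(natrM, natrD, natrX) -mulr_natr; ring.
Qed.

Lemma coef_binomial_Xn (k N c z : nat) : (0 < k)%N ->
  ((1 + 'X^k *+ c) ^+ N : {poly R})`_z =
  if (k %| z)%N then ('C(N, z %/ k) * c ^ (z %/ k))%:R else 0.
Proof.
move=> k_gt0; have -> : 1 + 'X^k *+ c = (1 + 'X *+ c) \Po 'X^k :> {poly R}.
  by rewrite comp_polyD comp_polyC raddfMn /= comp_polyX.
by rewrite -rmorphXn /= coef_comp_poly_Xn // coef_binomial.
Qed.

Lemma half_addn_subn (z j : nat) : (j <= z)%N -> ~~ odd (z - j) ->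
  (z + j)./2 = (j + (z - j)./2)%N.
Proof. by move=> jz; rewrite -!divn2 -dvdn2 => ev; lia. Qed.

Lemma coef_jsum (m nI z : nat) :
  ((1 + 'X *+ 2) ^+ nI * (1 + 'X^2 *+ 2) ^+ (m - nI) : {poly R})`_z =
  (jsum m nI z (odd z))%:R.
Proof.
rewrite coefM /jsum natr_sum big_mkord [RHS]big_mkcond /=; apply: eq_bigr => [[j /=]].
rewrite ltnS => jz _; rewrite coef_binomial coef_binomial_Xn // dvdn2 divn2 oddB //.
case: (boolP (odd j == odd z)) => [/eqP oj | ojz].
  rewrite oj addbb /= half_addn_subn ?oddB ?oj ?addbb // expnD.
  by rewrite -natrM mulnACA.
by move: ojz; case: (odd j); case: (odd z); rewrite ?mulr0.
Qed.

End PolyCoefficients.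

Section RandomParityCheck.

Variable F : finFieldType.

Lemma card_kerH_nz (r m : nat) (u : 'rV[F]_m) : u != 0 ->
  (#|[set H : 'M[F]_(r, m) | u \in kerH H]| * #|F| ^ r)%N = #|{: 'M[F]_(r, m)}|.
Proof.
move=> u_nz; have [B uB1] : exists B, u *m B = 1%:M.
  by apply/row_freeP; rewrite /row_free rank_rV u_nz.
have -> : (#|F| ^ r = #|{: 'rV[F]_r}|)%N by rewrite card_mx mul1n.
have -> : [set H : 'M[F]_(r, m) | u \in kerH H] = [set H | u *m H^T == 0].
  by apply/setP => H; rewrite !inE.
apply: card_preim0_surj => [H H'|y]; first by rewrite linearD /= mulmxDr.
by exists (B *m y)^T; rewrite trmxK mulmxA uB1 mul1mx.
Qed.

Lemma card_pow_neq0 (r : nat) : (#|F| ^ r)%:R != 0 :> rat.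
Proof. by rewrite pnatr_eq0 -lt0n expn_gt0 (ltnW (card_finNzRing_gt1 F)). Qed.

Lemma card_mx_neq0 (r m : nat) : #|{: 'M[F]_(r, m)}|%:R != 0 :> rat.
Proof. by rewrite card_mx card_pow_neq0. Qed.

Definition prob_kerH (r m : nat) (u : 'rV[F]_m) : rat :=
  if u == 0 then 1 else (#|F| ^ r)%:R^-1.

Lemma sum_in_kerH (r m : nat) (u : 'rV[F]_m) :
  \sum_(H : 'M[F]_(r, m)) (u \in kerH H)%:R = #|{: 'M[F]_(r, m)}|%:R * prob_kerH r u.
Proof.
rewrite -natr_sum -card_set_sum /prob_kerH; case: eqP => [->|/eqP u_nz].
  by rewrite mulr1; congr _%:R; apply: eq_card => H; rewrite !inE mul0mx eqxx.
by rewrite -(card_kerH_nz r u_nz) natrM mulfK ?card_pow_neq0.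
Qed.

Lemma expect1_kerE (r m : nat) (W : 'rV[F]_m -> nat) :
  expect1 (fun H : 'M[F]_(r, m) => \sum_u (u \in kerH H) * W u)%N =
  \sum_u (W u)%:R * prob_kerH r u.
Proof.
rewrite /expect1; under eq_bigr do rewrite natr_sum.
rewrite exchange_big mulr_suml; apply: eq_bigr => u _.
under eq_bigr do rewrite natrM mulrC.
by rewrite -mulr_sumr sum_in_kerH mulrCA mulrAC mulfV ?card_mx_neq0 ?mul1r.
Qed.

Lemma eq_expect1 (r m : nat) (f g : 'M[F]_(r, m) -> nat) :
  f =1 g -> expect1 f = expect1 g.
Proof. by move=> fg; rewrite /expect1; under eq_bigr do rewrite fg. Qed.

Lemma eq_expect2 (m rU rV : nat) (f g : 'M[F]_(rU, m) -> 'M[F]_(rV, m) -> nat) :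
  (forall HU HV, f HU HV = g HU HV) -> expect2 f = expect2 g.
Proof. by move=> fg; rewrite /expect2; under eq_bigr do under eq_bigr do rewrite fg. Qed.

Lemma expect1_cst (r m k : nat) : expect1 (fun _ : 'M[F]_(r, m) => k) = k%:R.
Proof.
by rewrite /expect1 sumr_const -[_ *+ #|_|]mulr_natr mulfK //; exact: card_mx_neq0.
Qed.

Lemma expect2_sumHU (m rU rV : nat) (f : 'M[F]_(rU, m) -> 'M[F]_(rV, m) -> nat) :
  expect2 f = (\sum_HU expect1 (f HU)) / #|{: 'M[F]_(rU, m)}|%:R.
Proof. by rewrite /expect2 /expect1 natrM invfM mulrA -mulr_suml mulrAC. Qed.

Lemma expect2_sumHV (m rU rV : nat) (f : 'M[F]_(rU, m) -> 'M[F]_(rV, m) -> nat) :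
  expect2 f = (\sum_HV expect1 (f^~ HV)) / #|{: 'M[F]_(rV, m)}|%:R.
Proof. by rewrite /expect2 /expect1 exchange_big natrM invfM mulrA -mulr_suml. Qed.

Lemma expect2_l (m rU rV : nat) (f : 'M[F]_(rU, m) -> nat) :
  expect2 (fun HU (_ : 'M[F]_(rV, m)) => f HU) = expect1 f.
Proof.
rewrite expect2_sumHU; under eq_bigr do rewrite expect1_cst.
by [].
Qed.

Lemma expect2_r (m rU rV : nat) (f : 'M[F]_(rV, m) -> nat) :
  expect2 (fun (_ : 'M[F]_(rU, m)) HV => f HV) = expect1 f.
Proof.
rewrite expect2_sumHV; under eq_bigr do rewrite expect1_cst.
by [].
Qed.

Lemma expect2_kerE (m rU rV : nat) (W : 'rV[F]_m -> 'rV[F]_m -> nat) :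
  expect2 (fun (HU : 'M[F]_(rU, m)) (HV : 'M[F]_(rV, m)) =>
    \sum_u (u \in kerH HU) * \sum_v (v \in kerH HV) * W u v)%N =
  \sum_u \sum_v (W u v)%:R * prob_kerH rU u * prob_kerH rV v.
Proof.
rewrite expect2_sumHV; under eq_bigr do rewrite expect1_kerE.
rewrite exchange_big mulr_suml; apply: eq_bigr => u _.
rewrite -mulr_suml mulrAC -[_ / _]/(expect1 _) expect1_kerE mulr_suml.
by apply: eq_bigr => v _; rewrite mulrAC.
Qed.

Lemma sum_prob_kerH (r m : nat) (G : 'rV[F]_m -> rat) :
  \sum_u G u * prob_kerH r u =
  (#|F| ^ r)%:R^-1 * \sum_u G u + (1 - (#|F| ^ r)%:R^-1) * G 0.
Proof.
rewrite (bigD1 0) // [X in _ = _ * X + _](bigD1 0) //= /prob_kerH eqxx mulr1.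
rewrite (eq_bigr (fun u => G u * (#|F| ^ r)%:R^-1)) => [|u /negPf ->] //.
by rewrite -mulr_suml; ring.
Qed.

Lemma sum_prob_kerH2 (m rU rV : nat) (W : 'rV[F]_m -> 'rV[F]_m -> rat) :
  let qU := (#|F| ^ rU)%:R^-1 in let qV := (#|F| ^ rV)%:R^-1 in
  \sum_u \sum_v W u v * prob_kerH rU u * prob_kerH rV v =
  qU * qV * (\sum_u \sum_v W u v) + qU * (1 - qV) * (\sum_u W u 0)
  + (1 - qU) * qV * (\sum_v W 0 v) + (1 - qU) * (1 - qV) * W 0 0.
Proof.
move=> qU qV; under eq_bigr do under eq_bigr do rewrite mulrAC.
under eq_bigr do rewrite -mulr_suml.
rewrite sum_prob_kerH !sum_prob_kerH; under eq_bigr do rewrite sum_prob_kerH.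
by rewrite big_split /= -!mulr_sumr /qU /qV; ring.
Qed.

Lemma expect1_kerE0 (r m : nat) (W : 'rV[F]_m -> nat) : W 0 = 0%N ->
  expect1 (fun H : 'M[F]_(r, m) => \sum_u (u \in kerH H) * W u)%N =
  (\sum_u W u)%N%:R / (#|F| ^ r)%:R.
Proof.
by move=> W0; rewrite expect1_kerE sum_prob_kerH natr_sum W0 mulr0 addr0 mulrC.
Qed.

End RandomParityCheck.

Section WeightCounts.

Variable F : finFieldType.

Lemma wtE (m : nat) (x : 'rV[F]_m) : wt x = (\sum_i (x 0%R i != 0%R))%N.
Proof. exact: card_set_sum. Qed.

Lemma wt0 (m : nat) : wt (0 : 'rV[F]_m) = 0%N.
Proof. by rewrite wtE big1 // => i _; rewrite mxE eqxx. Qed.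

Lemma wt_row_mx_hprod (m : nat) (b d v : 'rV[F]_m) :
  wt (row_mx (hprod b v) (hprod d v)) =
  (\sum_i ((b 0%R i != 0%R) + (d 0%R i != 0%R)) * (v 0%R i != 0%R))%N.
Proof.
rewrite wtE big_split_ord /= -big_split; apply: eq_bigr => i _.
rewrite row_mxEl row_mxEr !mxE !mulf_eq0 !negb_or.
by case: (b 0 i == 0); case: (d 0 i == 0); case: (v 0 i == 0).
Qed.

Lemma sum_neq0 (V : nmodType) (g : bool -> V) :
  \sum_(t : F) g (t != 0) = g false + g true *+ #|F|.-1.
Proof.
rewrite (bigD1 0) //= eqxx (eq_bigr (fun _ => g true)) => [|t /negPf ->] //.
by rewrite sumr_const -(cardC1 (0 : F)); congr (_ + _ *+ _); apply: eq_card.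
Qed.

Lemma sum_Xn_weighted (R : comNzRingType) (m : nat) (w : 'I_m -> nat) :
  \sum_(x : 'rV[F]_m) 'X^(\sum_i w i * (x 0%R i != 0%R)) =
  \prod_i (1 + 'X^(w i) *+ #|F|.-1) :> {poly R}.
Proof.
have row_bij : bijective (fun f : {ffun 'I_m -> F} => \row_i f i).
  exists (fun x : 'rV[F]_m => [ffun i => x 0 i]) => [f|x].
    by apply/ffunP => i; rewrite ffunE mxE.
  by apply/rowP => i; rewrite !mxE ffunE.
transitivity (\prod_i \sum_(t : F) 'X^(w i * (t != 0)) : {poly R}).
  rewrite bigA_distr_bigA (reindex _ (onW_bij _ row_bij)) /=.
  by apply: eq_bigr => f _; rewrite GRing.expr_sum; apply: eq_bigr => i _; rewrite mxE.
apply: eq_bigr => i _; rewrite (sum_neq0 (fun b : bool => 'X^(w i * b))).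
by rewrite muln0 muln1 expr0.
Qed.

Lemma count_weighted (m : nat) (w : 'I_m -> nat) (z : nat) :
  (\sum_(x : 'rV[F]_m) (\sum_i w i * (x 0%R i != 0%R) == z))%N%:R =
  (\prod_i (1 + 'X^(w i) *+ #|F|.-1) : {poly rat})`_z.
Proof. by rewrite -sum_Xn_weighted coef_sum_Xn. Qed.

Lemma card_wt (N z : nat) :
  (\sum_(x : 'rV[F]_N) (wt x == z))%N = ('C(N, z) * #|F|.-1 ^ z)%N.
Proof.
have wt1 (x : 'rV[F]_N) : wt x = (\sum_i 1 * (x 0%R i != 0%R))%N.
  by rewrite wtE; apply: eq_bigr => i _; rewrite mul1n.
apply/eqP; rewrite -(eqr_nat rat); apply/eqP; under eq_bigr do rewrite wt1.
by rewrite count_weighted prodr_const card_ord expr1 coef_binomial.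
Qed.

Lemma count_wt_hprod_nz (m z : nat) (a c : 'rV[F]_m) :
    (forall i, a 0 i * c 0 i != 0) ->
  (\sum_u (wt (row_mx (hprod a u) (hprod c u)) == z))%N =
  if odd z then 0%N else ('C(m, z./2) * #|F|.-1 ^ z./2)%N.
Proof.
move=> ac_nz.
have wt2 u : wt (row_mx (hprod a u) (hprod c u)) = (\sum_i 2 * (u 0%R i != 0%R))%N.
  rewrite wt_row_mx_hprod; apply: eq_bigr => i _.
  by move: (ac_nz i); rewrite mulf_eq0 negb_or => /andP[-> ->].
apply/eqP; rewrite -(eqr_nat rat); apply/eqP; under eq_bigr do rewrite wt2.
rewrite count_weighted prodr_const card_ord coef_binomial_Xn // dvdn2 divn2.
by case: (odd z).
Qed.

Lemma count_wt_hprod (m z : nat) (b d : 'rV[F]_m) :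
    (forall i, (b 0 i != 0) || (d 0 i != 0)) ->
  let nI := #|[set i | b 0 i * d 0 i == 0]| in
  (\sum_v (wt (row_mx (hprod b v) (hprod d v)) == z))%N%:R =
  ((1 + 'X *+ #|F|.-1) ^+ nI * (1 + 'X^2 *+ #|F|.-1) ^+ (m - nI) : {poly rat})`_z.
Proof.
move=> bd_nz nI; pose S := [set i | b 0 i * d 0 i == 0].
have wtS v : wt (row_mx (hprod b v) (hprod d v)) =
    (\sum_i (if i \in S then 1 else 2) * (v 0%R i != 0%R))%N.
  rewrite wt_row_mx_hprod; apply: eq_bigr => i _; rewrite inE mulf_eq0.
  by move: (bd_nz i); case: (b 0 i == 0); case: (d 0 i == 0).
under eq_bigr do rewrite wtS.
rewrite count_weighted (bigID (mem S)) /=.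
rewrite (eq_bigr (fun=> 1 + 'X *+ #|F|.-1)) => [|i ->] //.
rewrite [X in _ * X](eq_bigr (fun=> 1 + 'X^2 *+ #|F|.-1)) => [|i /negPf ->] //.
have cardSC : #|[predC S]| = (m - nI)%N by rewrite -[in RHS](card_ord m) -(cardC S) addKn.
by rewrite !prodr_const -cardSC.
Qed.

End WeightCounts.

Lemma det1_eq0 (R : comNzRingType) (a b c d x y : R) : a * d - b * c = 1 ->
  a * x + b * y = 0 -> c * x + d * y = 0 -> x = 0 /\ y = 0.
Proof.
move=> det e1 e2; split.
  have -> : x = d * (a * x + b * y) - b * (c * x + d * y).
    by rewrite -[LHS]mul1r -det; ring.
  by rewrite e1 e2 !mulr0 subrr.
have -> : y = a * (c * x + d * y) - c * (a * x + b * y).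
  by rewrite -[LHS]mul1r -det; ring.
by rewrite e1 e2 !mulr0 subrr.
Qed.

Lemma det1_neq0 (R : nzRingType) (a b c d : R) :
  a * d - b * c = 1 -> (b != 0) || (d != 0).
Proof.
move=> det; rewrite -negb_and; apply/negP => /andP[/eqP b0 /eqP d0].
by move: det; rewrite b0 d0 mulr0 mul0r subrr => /esym/eqP; rewrite oner_eq0.
Qed.

Section Codes.

Variable F : finFieldType.

Lemma nwtE (n : nat) (S : {set 'rV[F]_n}) (z : nat) :
  nwt S z = (\sum_x (x \in S) * (wt x == z))%N.
Proof. by rewrite /nwt card_set_sum; apply: eq_bigr => x _; rewrite mulnb. Qed.

Lemma nwt_imset (n : nat) (T : finType) (f : T -> 'rV[F]_n) (A : {set T}) (z : nat) :
  injective f -> nwt (f @: A) z = (\sum_x (x \in A) * (wt (f x) == z))%N.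
Proof.
move=> f_inj; rewrite /nwt.
have -> : [set y in f @: A | wt y == z] = f @: [set x in A | wt (f x) == z].
  apply/setP => y; rewrite !inE; apply/andP/imsetP => [[/imsetP[x xA ->] wz]|[x]].
    by exists x; rewrite // inE xA.
  by rewrite inE => /andP[xA wz] ->; rewrite imset_f.
by rewrite card_imset // card_set_sum; apply: eq_bigr => x _; rewrite mulnb.
Qed.

Lemma row_mx_hprod_inj (m : nat) (b d : 'rV[F]_m) :
    (forall i, (b 0 i != 0) || (d 0 i != 0)) ->
  injective (fun u => row_mx (hprod b u) (hprod d u)).
Proof.
move=> bd_nz u u' /eq_row_mx[e1 e2]; apply/rowP => i.
move/rowP/(_ i): e1; move/rowP/(_ i): e2; rewrite !mxE.
by case/orP: (bd_nz i) => nz; [move=> _ /(mulfI nz) | move=> /(mulfI nz)].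
Qed.

Lemma hprod0 (m : nat) (a : 'rV[F]_m) : hprod a 0 = 0.
Proof. by apply/rowP => i; rewrite !mxE mulr0. Qed.

Lemma expect1_nwt_kerH (r m z : nat) : (0 < z)%N ->
  expect1 (fun H : 'M[F]_(r, m) => nwt (kerH H) z) =
  ('C(m, z) * #|F|.-1 ^ z)%:R / (#|F| ^ r)%:R.
Proof.
move=> z_gt0; rewrite (eq_expect1 (fun H => nwtE (kerH H) z)) expect1_kerE0 ?card_wt //.
by rewrite wt0; case: z z_gt0.
Qed.

Lemma expect1_nwt_imset_kerH (r m n z : nat) (f : 'rV[F]_m -> 'rV[F]_n) :
  injective f -> f 0 = 0 -> (0 < z)%N ->
  expect1 (fun H : 'M[F]_(r, m) => nwt (f @: kerH H) z) =
  (\sum_u (wt (f u) == z))%N%:R / (#|F| ^ r)%:R.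
Proof.
move=> f_inj f0 z_gt0.
rewrite (eq_expect1 (fun H => nwt_imset _ z f_inj)) expect1_kerE0 //.
by rewrite f0 wt0; case: z z_gt0.
Qed.

Variables (m : nat) (a b c d : 'rV[F]_m).

Lemma expect_nwt_codeCU (rU rV z : nat) : (forall i, (a 0 i != 0) || (c 0 i != 0)) ->
    (0 < z)%N ->
  expect2 (fun (HU : 'M[F]_(rU, m)) (_ : 'M[F]_(rV, m)) => nwt (codeCU a c HU) z) =
  (\sum_u (wt (row_mx (hprod a u) (hprod c u)) == z))%N%:R / (#|F| ^ rU)%:R.
Proof.
move=> ac_nz z_gt0; rewrite expect2_l expect1_nwt_imset_kerH //.
  exact: row_mx_hprod_inj.
by rewrite !hprod0 row_mx0.
Qed.

Lemma expect_nwt_codeCV (rU rV z : nat) : (forall i, (b 0 i != 0) || (d 0 i != 0)) ->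
    (0 < z)%N ->
  expect2 (fun (_ : 'M[F]_(rU, m)) (HV : 'M[F]_(rV, m)) => nwt (codeCV b d HV) z) =
  (\sum_v (wt (row_mx (hprod b v) (hprod d v)) == z))%N%:R / (#|F| ^ rV)%:R.
Proof.
move=> bd_nz z_gt0; rewrite expect2_r expect1_nwt_imset_kerH //.
  exact: row_mx_hprod_inj.
by rewrite !hprod0 row_mx0.
Qed.

Hypothesis det1 : forall i, a 0 i * d 0 i - b 0 i * c 0 i = 1.

Lemma hprod_pair_inj :
  injective (fun p : 'rV[F]_m * 'rV[F]_m =>
    row_mx (hprod a p.1 + hprod b p.2) (hprod c p.1 + hprod d p.2)).
Proof.
move=> [u v] [u' v'] /eq_row_mx[e1 e2] /=.
have uv_eq i : u 0 i - u' 0 i = 0 /\ v 0 i - v' 0 i = 0.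
  apply: (det1_eq0 (det1 i));
    apply/eqP; rewrite !mulrBr addrACA -opprD subr_eq0; apply/eqP.
  - by move/rowP/(_ i): e1; rewrite !mxE.
  - by move/rowP/(_ i): e2; rewrite !mxE.
congr (_, _); apply/rowP => i; apply/eqP; rewrite -subr_eq0.
  by have [-> _] := uv_eq i.
by have [_ ->] := uv_eq i.
Qed.

Lemma count_wt_hprod_pair (z : nat) :
  (\sum_u \sum_v (wt (row_mx (hprod a u + hprod b v) (hprod c u + hprod d v)) == z))%N =
  ('C(m + m, z) * #|F|.-1 ^ z)%N.
Proof.
have phi_bij := inj_card_bij hprod_pair_inj.
rewrite pair_bigA /= -card_wt (reindex _ (onW_bij _ (phi_bij _))) //.
by rewrite card_prod !card_mx !mul1n expnD.
Qed.

Lemma nwt_codeC (rU rV : nat) (HU : 'M[F]_(rU, m)) (HV : 'M[F]_(rV, m)) (z : nat) :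
  nwt (codeC a b c d HU HV) z =
  (\sum_u (u \in kerH HU) * \sum_v (v \in kerH HV) *
     (wt (row_mx (hprod a u + hprod b v) (hprod c u + hprod d v)) == z))%N.
Proof.
rewrite /codeC curry_imset2X nwt_imset; last first.
  (* [prod_curry] matches on its argument, so the pairs must be destructed first. *)
  by move=> [u v] [u' v'] e; exact: (@hprod_pair_inj (u, v) (u', v') e).
under [RHS]eq_bigr do rewrite big_distrr /=.
by rewrite pair_bigA; apply: eq_bigr => [[u v]] _ /=; rewrite in_setX -mulnb mulnA.
Qed.

Lemma expect_nwt_codeC (rU rV z : nat) : (0 < z)%N ->
  let qU := (#|F| ^ rU)%:R^-1 in let qV := (#|F| ^ rV)%:R^-1 in
  expect2 (fun (HU : 'M[F]_(rU, m)) (HV : 'M[F]_(rV, m)) =>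
    nwt (codeC a b c d HU HV) z) =
  qU * qV * ('C(m + m, z) * #|F|.-1 ^ z)%:R
  + qU * (1 - qV) * (\sum_u (wt (row_mx (hprod a u) (hprod c u)) == z))%N%:R
  + (1 - qU) * qV * (\sum_v (wt (row_mx (hprod b v) (hprod d v)) == z))%N%:R.
Proof.
move=> z_gt0 qU qV.
rewrite (eq_expect2 (fun HU HV => nwt_codeC HU HV z)) expect2_kerE sum_prob_kerH2.
rewrite -count_wt_hprod_pair !natr_sum; under eq_bigr do rewrite natr_sum.
rewrite !hprod0 addr0 row_mx0 wt0 (_ : (0 == z) = false) ?mulr0 ?addr0; last first.
  by case: z z_gt0.
congr (_ + _ + _); congr (_ * _); apply: eq_bigr => x _; by rewrite ?addr0 ?add0r.
Qed.

End Codes.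

Lemma card_F3 : #|'F_3| = 3%N.
Proof. by rewrite card_Fp. Qed.

Lemma count_wt_hprod_F3 (m z : nat) (b d : 'rV['F_3]_m) :
    (forall i, (b 0 i != 0) || (d 0 i != 0)) ->
  (\sum_v (wt (row_mx (hprod b v) (hprod d v)) == z))%N =
  jsum m #|[set i | b 0 i * d 0 i == 0]| z (odd z).
Proof.
move=> bd_nz; apply/eqP.
by rewrite -(eqr_nat rat) (count_wt_hprod _ bd_nz) card_F3 coef_jsum.
Qed.

Theorem proposition8 (n kU kV : nat) (a b c d : 'rV['F_3]_(n./2))
  (hn : ~~ odd n) (hkU : (kU <= n./2)%N) (hkV : (kV <= n./2)%N)
  (hdet : forall i, a 0 i * d 0 i - b 0 i * c 0 i = 1)
  (hac : forall i, a 0 i * c 0 i != 0) :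
  let m := n./2 in
  let nI := #|[set i : 'I_m | b 0 i * d 0 i == 0]| in
  let aUV := fun z => expect2 (fun (HU : 'M['F_3]_(m - kU, m)) (HV : 'M['F_3]_(m - kV, m))
                                  => nwt (codeC a b c d HU HV) z) in
  let aU0 := fun z => expect2 (fun (HU : 'M['F_3]_(m - kU, m)) (HV : 'M['F_3]_(m - kV, m))
                                  => nwt (codeCU a c HU) z) in
  let a0V := fun z => expect2 (fun (HU : 'M['F_3]_(m - kU, m)) (HV : 'M['F_3]_(m - kV, m))
                                  => nwt (codeCV b d HV) z) in
  (forall z : nat, (1 <= z <= n)%N -> ~~ odd z ->
     [/\ aU0 z = ('C(m, z./2) * 2 ^ z./2)%:R / (3 ^ (m - kU))%:R,
         a0V z = (jsum m nI z false)%:R / (3 ^ (m - kV))%:R &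
         aUV z = aU0 z + a0V z
                 + (('C(n, z) * 2 ^ z)%:R - ('C(m, z./2) * 2 ^ z./2)%:R
                    - (jsum m nI z false)%:R) / (3 ^ (n - kU - kV))%:R]) /\
  (forall z : nat, (1 <= z <= n)%N -> odd z ->
     [/\ aU0 z = 0,
         a0V z = (jsum m nI z true)%:R / (3 ^ (m - kV))%:R &
         aUV z = a0V z
                 + (('C(n, z) * 2 ^ z)%:R - (jsum m nI z true)%:R)
                   / (3 ^ (n - kU - kV))%:R]) /\
  (forall z : nat, (0 < z)%N ->
     expect1 (fun H : 'M['F_3]_(n - kU - kV, n) => nwt (kerH H) z)
     = ('C(n, z) * 2 ^ z)%:R / (3 ^ (n - kU - kV))%:R).
Proof.
move=> m nI aUV aU0 a0V.
have n_mm : n = (m + m)%N by rewrite addnn -[LHS](odd_double_half n) (negbTE hn).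
have q_neq0 r : (3 ^ r)%:R != 0 :> rat by rewrite pnatr_eq0 -lt0n expn_gt0.
have q_split : (3 ^ (n - kU - kV))%:R = (3 ^ (m - kU))%:R * (3 ^ (m - kV))%:R :> rat.
  by rewrite -natrM -expnD; congr (3 ^ _)%:R; lia.
have ac_nz i : (a 0 i != 0) || (c 0 i != 0).
  by move: (hac i); rewrite mulf_eq0 negb_or => /andP[->].
have bd_nz i := det1_neq0 (hdet i).
pose NU z := if odd z then 0%N else ('C(m, z./2) * 2 ^ z./2)%N.
have expectE z : (0 < z)%N -> [/\ aU0 z = (NU z)%:R / (3 ^ (m - kU))%:R,
    a0V z = (jsum m nI z (odd z))%:R / (3 ^ (m - kV))%:R &
    aUV z = (3 ^ (m - kU))%:R^-1 * (3 ^ (m - kV))%:R^-1 * ('C(n, z) * 2 ^ z)%:R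
      + (3 ^ (m - kU))%:R^-1 * (1 - (3 ^ (m - kV))%:R^-1) * (NU z)%:R
      + (1 - (3 ^ (m - kU))%:R^-1) * (3 ^ (m - kV))%:R^-1 * (jsum m nI z (odd z))%:R].
  move=> z_gt0; rewrite /aU0 /a0V /aUV expect_nwt_codeCU // expect_nwt_codeCV //.
  rewrite expect_nwt_codeC // count_wt_hprod_nz // count_wt_hprod_F3 //.
  by rewrite card_F3 -n_mm.
split; [|split] => [z /andP[z_gt0 _] z_even|z /andP[z_gt0 _] z_odd|z z_gt0].
- have [-> -> ->] := expectE z z_gt0; rewrite /NU (negbTE z_even) q_split.
  by split => //; field; rewrite !q_neq0.
- have [-> -> ->] := expectE z z_gt0; rewrite /NU z_odd q_split mul0r.
  by split => //; field; rewrite !q_neq0.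
- by rewrite expect1_nwt_kerH // card_F3.
Qed.
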